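(* Every generic Euclidean triangle is typical.
   Context: A Euclidean triangle with edge lengths $\ell_1,\ell_2,\ell_3$ and interior angles $\alpha_1,\alpha_2,\alpha_3$ is generic if for some real $k>0$ the numbers $k\ell_1,k\ell_2,k\ell_3$ are algebraically independent over $\mathbb{Q}$; it is typical if $\alpha_1,\alpha_2,\alpha_3$ are linearly independent over $\mathbb{Q}$. *)

From HB Require Import structures.
From mathcomp Require Import all_boot all_order all_algebra.
From mathcomp Require Import reals.
From mathcomp Require Import mpoly.
From mathcomp Require Import trigo.
Set Implicit Arguments. Unset Strict Implicit. Unset Printing Implicit Defensive.
Import Order.TTheory GRing.Theory Num.Theory.
Local Open Scope ring_scope.

Definition alg_indep_Q (R : realType) (n : nat) (v : 'I_n -> R) : Prop :=
  forall p : {mpoly rat[n]}, mmap (ratr : rat -> R) v p = 0 -> p = 0.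

Definition lin_indep_Q (R : realType) (n : nat) (v : 'I_n -> R) : Prop :=
  forall q : 'I_n -> rat, \sum_(i < n) ratr (q i) * v i = 0 -> forall i, q i = 0.

Definition is_triangle (R : realType) (l : 'I_3 -> R) : Prop :=
  (forall i, 0 < l i) /\
  l 0 < l 1 + l 2 /\ l 1 < l 0 + l 2 /\ l 2 < l 0 + l 1.

Definition tri_angle (R : realType) (l : 'I_3 -> R) (i : 'I_3) : R :=
  let a := l i in
  let b := l (i + 1)%R in
  let c := l (i + 2%:R)%R in
  acos ((b ^+ 2 + c ^+ 2 - a ^+ 2) / (2 * b * c)).

Definition generic_triangle (R : realType) (l : 'I_3 -> R) : Prop :=
  exists k : R, 0 < k /\ alg_indep_Q (fun i => k * l i).

Definition typical_triangle (R : realType) (l : 'I_3 -> R) : Prop :=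
  lin_indep_Q (tri_angle l).

From HB Require Import structures.
From mathcomp Require Import all_boot all_order all_algebra ring lra.
From mathcomp Require Import reals mpoly trigo.
Set Implicit Arguments. Unset Strict Implicit. Unset Printing Implicit Defensive.
Import Order.TTheory GRing.Theory Num.Theory.
Local Open Scope ring_scope.

(* Let a, b, c be the sides and H = 16 area^2 (Heron's product). By the law of
   cosines, 2bc e^(i alpha) = (b^2 + c^2 - a^2) + i sqrt H for each angle alpha,
   with the same H for all three. A relation sum_j u_j alpha_j = sum_j v_j alpha_j
   with natural u, v therefore gives, after clearing denominators, an identity
   between two elements of Q[x][w]/(w^2 + H(x)) evaluated at the sides, w |-> i sqrt H.
   Algebraic independence of the sides turns it into a polynomial identity. At
   the flat triangles (b + c, b, c) we have H = 0, so w becomes a dual number,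
   and the w-coefficient of the identity yields sum_j (u_j - v_j) / p_j = 0,
   p_j being the cosine numerators. Two flat triangles force u_j - v_j to be
   independent of j, and since the angle sum is positive it vanishes. *)

(* The pair (a, b) stands for a + b w in S[w]/(w^2 + Q). *)
Definition quadext (S : comPzRingType) (Q : S) : Type := (S * S)%type.

Section QuadraticExtension.
Variables (S : comPzRingType) (Q : S).
Local Notation quadext := (quadext Q).
HB.instance Definition _ := GRing.Zmodule.on quadext.

Definition quad_mul (x y : quadext) : quadext :=
  (x.1 * y.1 - Q * (x.2 * y.2), x.1 * y.2 + x.2 * y.1).

Fact quad_mulA : associative quad_mul.
Proof. by move=> [a1 a2] [b1 b2] [c1 c2]; congr pair => /=; ring. Qed.
Fact quad_mulC : commutative quad_mul.
Proof. by move=> [a1 a2] [b1 b2]; congr pair => /=; ring. Qed.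
Fact quad_mul1 : left_id ((1, 0) : quadext) quad_mul.
Proof. by move=> [a1 a2]; congr pair => /=; ring. Qed.
Fact quad_mulDl : left_distributive quad_mul +%R.
Proof. by move=> [a1 a2] [b1 b2] [c1 c2]; congr pair => /=; ring. Qed.

HB.instance Definition _ := GRing.Zmodule_isComPzRing.Build quadext
  quad_mulA quad_mulC quad_mul1 quad_mulDl.

Definition qconst (a : S) : quadext := (a, 0).
Definition qroot : quadext := (0, 1).

Fact qconst_is_nmod_morphism : nmod_morphism qconst.
Proof. by split=> // a b; rewrite /qconst; congr pair => /=; rewrite addr0. Qed.
Fact qconst_is_monoid_morphism : monoid_morphism qconst.
Proof. by split=> // a b; congr pair => /=; ring. Qed.
HB.instance Definition _ := GRing.isNmodMorphism.Build S quadext qconst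
  qconst_is_nmod_morphism.
HB.instance Definition _ := GRing.isMonoidMorphism.Build S quadext qconst
  qconst_is_monoid_morphism.

End QuadraticExtension.
Arguments qroot {S Q}.
Arguments qconst {S} Q.

Section QuadMap.
Variables (S T : comPzRingType) (f : {rmorphism S -> T}) (Q : S).

Definition quad_map (x : quadext Q) : quadext (f Q) := (f x.1, f x.2).

Fact quad_map_is_nmod_morphism : nmod_morphism quad_map.
Proof. by split=> [|a b]; rewrite /quad_map /= ?rmorph0 // !rmorphD. Qed.
Fact quad_map_is_monoid_morphism : monoid_morphism quad_map.
Proof.
split=> [|a b]; first by rewrite /quad_map /= rmorph1 rmorph0.
by rewrite /quad_map /=; congr pair; rewrite /= ?rmorphB ?rmorphD !rmorphM.
Qed.
HB.instance Definition _ := GRing.isNmodMorphism.Build (quadext Q) (quadext (f Q))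
  quad_map quad_map_is_nmod_morphism.
HB.instance Definition _ := GRing.isMonoidMorphism.Build (quadext Q) (quadext (f Q))
  quad_map quad_map_is_monoid_morphism.

Lemma quad_map_qconst a : quad_map (qconst Q a) = qconst (f Q) (f a).
Proof. by rewrite /quad_map /= rmorph0. Qed.

Lemma quad_map_qroot : quad_map qroot = qroot.
Proof. by rewrite /quad_map /= rmorph0 rmorph1. Qed.

Lemma quad_map_inj : injective f -> injective quad_map.
Proof. by move=> f_inj [a1 a2] [b1 b2] [/f_inj-> /f_inj->]. Qed.
End QuadMap.
Arguments quad_map {S T} f {Q}.

Section QuadRescale.
Variables (S : comPzRingType) (Q Q' D : S).
Hypothesis hQ : Q = D ^+ 2 * Q'.

(* w |-> D w, a ring map because w^2 = -Q = -D^2 Q'. *)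
Definition quad_rescale of Q = D ^+ 2 * Q' :=
  fun x : quadext Q => (x.1, D * x.2) : quadext Q'.
Local Notation rescale := (quad_rescale hQ).

Fact quad_rescale_is_nmod_morphism : nmod_morphism rescale.
Proof. by split=> [|a b]; rewrite /quad_rescale /= ?mulr0 // mulrDr. Qed.
Fact quad_rescale_is_monoid_morphism : monoid_morphism rescale.
Proof.
split=> [|a b]; first by rewrite /quad_rescale /= mulr0.
by rewrite /quad_rescale hQ; congr pair => /=; ring.
Qed.
HB.instance Definition _ := GRing.isNmodMorphism.Build (quadext Q) (quadext Q')
  rescale quad_rescale_is_nmod_morphism.
HB.instance Definition _ := GRing.isMonoidMorphism.Build (quadext Q) (quadext Q')
  rescale quad_rescale_is_monoid_morphism.

Lemma quad_rescale_qconst a : rescale (qconst Q a) = qconst Q' a.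
Proof. by rewrite /quad_rescale /= mulr0. Qed.

Lemma quad_rescale_qroot : rescale qroot = qconst Q' D * qroot.
Proof. by rewrite /quad_rescale; congr pair => /=; ring. Qed.

Lemma quad_rescale_inj : GRing.lreg D -> injective rescale.
Proof. by move=> D_reg [a1 a2] [b1 b2] [-> /D_reg->]. Qed.
End QuadRescale.
Arguments quad_rescale {S Q Q' D}.
Arguments quad_rescale_inj {S Q Q' D} hQ.

Lemma morph_sum_natmul (R : pzSemiRingType) (T : comPzSemiRingType) (f : R -> T)
    (n : nat) (a : 'I_n -> R) (u : 'I_n -> nat) :
  {morph f : x y / x + y >-> x * y} -> f 0 = 1 ->
  f (\sum_i (u i)%:R * a i) = \prod_i f (a i) ^+ u i.
Proof.
move=> fD f0; rewrite (big_morph f fD f0); apply: eq_bigr => i _.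
elim: (u i) => [|k IHk]; first by rewrite mul0r f0.
by rewrite mulrSr mulrDl mul1r fD IHk exprSr.
Qed.

(* With z_i = (p_i + w) / s_i, this is prod_i s_i^(u_i + v_i) * prod_i z_i^u_i with
   the denominators cleared, so angle_word u v = angle_word v u says that
   prod_i z_i^u_i = prod_i z_i^v_i. *)
Definition angle_word (S : comPzRingType) (n : nat) (Q : S) (s p : 'I_n -> S)
    (u v : 'I_n -> nat) : quadext Q :=
  qconst Q (\prod_i s i ^+ v i) * \prod_i (qconst Q (p i) + qroot) ^+ u i.

Lemma quad_map_angle_word (S T : comPzRingType) (f : {rmorphism S -> T}) (n : nat)
    (Q : S) (s p : 'I_n -> S) (s' p' : 'I_n -> T) (u v : 'I_n -> nat) :
  (forall i, f (s i) = s' i) -> (forall i, f (p i) = p' i) ->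
  quad_map f (angle_word Q s p u v) = angle_word (f Q) s' p' u v.
Proof.
move=> fs fp; rewrite /angle_word rmorphM /= quad_map_qconst !rmorph_prod /=.
congr (_ * _); apply: eq_bigr => i _; rewrite rmorphXn /=.
  by rewrite fs.
by rewrite rmorphD /= quad_map_qconst quad_map_qroot fp.
Qed.

Lemma quad_rescale_angle_word (S : comPzRingType) (n : nat) (Q Q' D : S)
    (hQ : Q = D ^+ 2 * Q') (s p c : 'I_n -> S) (z : 'I_n -> quadext Q')
    (u v : 'I_n -> nat) :
  (forall i, qconst Q' (p i) + qconst Q' D * qroot = qconst Q' (c i) * z i) ->
  quad_rescale hQ (angle_word Q s p u v) =
    qconst Q' (\prod_i s i ^+ v i * \prod_i c i ^+ u i) * \prod_i z i ^+ u i.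
Proof.
move=> hz; rewrite /angle_word rmorphM /= quad_rescale_qconst rmorphM !rmorph_prod /=.
rewrite -mulrA; congr (_ * _); rewrite -big_split /=; apply: eq_bigr => i _.
rewrite !rmorphXn rmorphD /= quad_rescale_qconst quad_rescale_qroot hz.
by rewrite exprMn.
Qed.

Section DualNumbers.
Variable F : fieldType.

Definition dual (t : F) : quadext (0 : F) := 1 + qconst 0 t * qroot.

Lemma dualD : {morph dual : a b / a + b >-> a * b}.
Proof. by move=> a b; rewrite /dual; congr pair => /=; ring. Qed.

Lemma dual0 : dual 0 = 1.
Proof. by rewrite /dual rmorph0 mul0r addr0. Qed.

Lemma qconst_add_qroot (p : F) : p != 0 ->
  qconst 0 p + qroot = qconst 0 p * dual p^-1.
Proof. by move=> p0; rewrite /dual mulrDr mulr1 mulrA -rmorphM divff // mul1r. Qed.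

Lemma qconst_mul_dual (a t : F) : qconst 0 a * dual t = (a, a * t).
Proof. by rewrite /dual; congr pair => /=; ring. Qed.

Lemma qconst_mul_dual_inj (a b s t : F) : a != 0 ->
  qconst 0 a * dual s = qconst 0 b * dual t -> a = b /\ s = t.
Proof.
by move=> a0; rewrite !qconst_mul_dual => -[<- /(mulfI a0)].
Qed.
End DualNumbers.

Section Rotations.
Variable R : realType.

Definition rot (t : R) : quadext (1 : R) := (cos t, sin t).

Lemma rotD : {morph rot : a b / a + b >-> a * b}.
Proof. by move=> a b; rewrite /rot cosD sinD; congr pair => /=; ring. Qed.

Lemma rot0 : rot 0 = 1.
Proof. by rewrite /rot cos0 sin0. Qed.
End Rotations.

Lemma ord3P (j : 'I_3) : [\/ j = 0, j = 1 | j = 2%:R].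
Proof.
case: j => -[|[|[|]]] // ?; [apply: Or31 | apply: Or32 | apply: Or33].
all: exact: val_inj.
Qed.

Lemma ord3_addE : ((1 + 1 : 'I_3) = 2%:R) * ((1 + 2%:R : 'I_3) = 0) *
  ((2%:R + 1 : 'I_3) = 0) * ((2%:R + 2%:R : 'I_3) = 1).
Proof. by do !split; apply: val_inj. Qed.

Lemma big_ord3 (V : nmodType) (F : 'I_3 -> V) : \sum_i F i = F 0 + F 1 + F 2%:R.
Proof.
rewrite !big_ord_recl big_ord0 addr0 addrA.
by congr (F _ + F _ + F _); apply: val_inj.
Qed.

Section LawOfCosines.
Variables (S : comPzRingType) (x : 'I_3 -> S).

Definition cos_num (j : 'I_3) : S := x (j + 1) ^+ 2 + x (j + 2%:R) ^+ 2 - x j ^+ 2.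
Definition cos_den (j : 'I_3) : S := 2 * x (j + 1) * x (j + 2%:R).
Definition heron : S :=
  (x 0 + x 1 + x 2%:R) * (- x 0 + x 1 + x 2%:R) * (x 0 - x 1 + x 2%:R) *
  (x 0 + x 1 - x 2%:R).

Lemma heronE j : cos_den j ^+ 2 - cos_num j ^+ 2 = heron.
Proof.
rewrite /cos_den /cos_num /heron.
by case: (ord3P j) => ->; rewrite ?add0r ?ord3_addE; ring.
Qed.
End LawOfCosines.

Section Triangle.
Variables (R : realType) (x : 'I_3 -> R).
Hypothesis xt : is_triangle x.

Lemma heron_gt0 : 0 < heron x.
Proof.
have [x_gt0 [x0_lt [x1_lt x2_lt]]] := xt.
have := x_gt0 0; have := x_gt0 1; have := x_gt0 2%:R => ? ? ?.
by rewrite /heron !mulr_gt0 //; lra.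
Qed.

Lemma cos_den_gt0 j : 0 < cos_den x j.
Proof. by have [x_gt0 _] := xt; rewrite /cos_den !mulr_gt0. Qed.

Lemma tri_angleE j : tri_angle x j = acos (cos_num x j / cos_den x j).
Proof. by []. Qed.

Lemma tri_cos_sqr j : 1 - (cos_num x j / cos_den x j) ^+ 2 = heron x / cos_den x j ^+ 2.
Proof.
rewrite -(heronE x j) expr_div_n mulrBl divff //.
by rewrite expf_neq0 // gt_eqF // cos_den_gt0.
Qed.

Lemma tri_cos_bounds j : -1 < cos_num x j / cos_den x j < 1.
Proof.
have : 0 < 1 - (cos_num x j / cos_den x j) ^+ 2.
  by rewrite tri_cos_sqr divr_gt0 ?exprn_gt0 ?heron_gt0 ?cos_den_gt0.
by move=> ?; apply/andP; split; nra.
Qed.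

Lemma tri_angle_gt0 j : 0 < tri_angle x j.
Proof.
by have /andP[lt1 gt1] := tri_cos_bounds j; rewrite tri_angleE acos_gt0 // ltW.
Qed.

Lemma rot_tri_angle j :
  qconst 1 (cos_num x j) + qconst 1 (Num.sqrt (heron x)) * qroot =
  qconst 1 (cos_den x j) * rot (tri_angle x j).
Proof.
have /andP[lt1 gt1] := tri_cos_bounds j.
have s_gt0 := cos_den_gt0 j.
have sin_eq : Num.sqrt (heron x / cos_den x j ^+ 2) = Num.sqrt (heron x) / cos_den x j.
  rewrite (sqrtrM _ (ltW heron_gt0)) sqrtrV ?exprn_ge0 ?ltW //.
  by rewrite sqrtr_sqr gtr0_norm.
rewrite /rot tri_angleE acosK ?in_itv /= ?ltW // sin_acos ?ltW // tri_cos_sqr sin_eq.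
by congr pair => /=; field; rewrite gt_eqF.
Qed.
End Triangle.

Lemma is_triangle_scale (R : realType) (l : 'I_3 -> R) (k : R) : 0 < k ->
  is_triangle l -> is_triangle (fun i => k * l i).
Proof.
move=> k_gt0 [l_gt0 [lt0 [lt1 lt2]]]; split; first by move=> i; rewrite mulr_gt0.
by rewrite -!mulrDr !ltr_pM2l.
Qed.

Lemma tri_angle_scale (R : realType) (l : 'I_3 -> R) (k : R) j : 0 < k ->
  (forall i, 0 < l i) -> tri_angle (fun i => k * l i) j = tri_angle l j.
Proof.
move=> k_gt0 l_gt0; rewrite /tri_angle; congr acos.
by field; rewrite !gt_eqF.
Qed.

Section LawOfCosinesMorph.
Variables (S T : comPzRingType) (f : {rmorphism S -> T}) (y : 'I_3 -> S) (x : 'I_3 -> T).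
Hypothesis fyx : forall i, f (y i) = x i.

Lemma rmorph_cos_num j : f (cos_num y j) = cos_num x j.
Proof. by rewrite /cos_num !rmorphD rmorphN !rmorphXn !fyx. Qed.

Lemma rmorph_cos_den j : f (cos_den y j) = cos_den x j.
Proof. by rewrite /cos_den !rmorphM rmorph_nat !fyx. Qed.

Lemma rmorph_heron : f (heron y) = heron x.
Proof. by rewrite /heron !rmorphM !rmorphD !rmorphN !fyx. Qed.
End LawOfCosinesMorph.

Definition mvar3 : 'I_3 -> {mpoly rat[3]} := fun i => 'X_i.

Definition triangle_word (u v : 'I_3 -> nat) : quadext (heron mvar3) :=
  angle_word (heron mvar3) (cos_den mvar3) (cos_num mvar3) u v.

Lemma mmap_mvar3 (F : numFieldType) (x : 'I_3 -> F) i :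
  mmap (ratr : rat -> F) x (mvar3 i) = x i.
Proof. by rewrite /mvar3 /= mmapX mmap1U. Qed.

Lemma alg_indep_Q_mmap_inj (R : realType) (n : nat) (x : 'I_n -> R) :
  alg_indep_Q x -> injective (mmap (ratr : rat -> R) x).
Proof.
move=> x_indep p q epq; apply/eqP; rewrite -subr_eq0; apply/eqP/x_indep.
by rewrite rmorphB /= epq subrr.
Qed.

Lemma triangle_word_sym_of_angles (R : realType) (x : 'I_3 -> R) (u v : 'I_3 -> nat) :
  is_triangle x -> alg_indep_Q x ->
  \sum_i (u i)%:R * tri_angle x i = \sum_i (v i)%:R * tri_angle x i ->
  triangle_word u v = triangle_word v u.
Proof.
move=> xt x_indep angle_eq.
set ev := mmap (ratr : rat -> R) x.
have ev_heron : ev (heron mvar3) = Num.sqrt (heron x) ^+ 2 * 1.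
  rewrite mulr1 sqr_sqrtr ?(ltW (heron_gt0 xt)) //.
  exact: rmorph_heron (mmap_mvar3 x).
have sqrt_reg : GRing.lreg (Num.sqrt (heron x)).
  by apply/mulrI; rewrite unitfE gt_eqF // sqrtr_gt0 heron_gt0.
have rescaled w w' : quad_rescale ev_heron (quad_map ev (triangle_word w w')) =
    qconst 1 (\prod_i cos_den x i ^+ w' i * \prod_i cos_den x i ^+ w i) *
    rot (\sum_i (w i)%:R * tri_angle x i).
  rewrite (quad_map_angle_word _ _ _ (rmorph_cos_den (mmap_mvar3 x))
                                     (rmorph_cos_num (mmap_mvar3 x))).
  rewrite (quad_rescale_angle_word _ _ _ _ (rot_tri_angle xt)).
  by rewrite (morph_sum_natmul _ _ (@rotD R) (rot0 R)).
have := rescaled v u; rewrite -angle_eq [X in qconst _ X]mulrC -(rescaled u v).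
move/(quad_rescale_inj ev_heron sqrt_reg).
by move/(quad_map_inj (alg_indep_Q_mmap_inj x_indep))->.
Qed.

(* At a degenerate triangle w becomes a dual number, and the w-coefficient of the
   word is its logarithmic derivative. *)
Lemma triangle_word_sym_degenerate (F : realFieldType) (y : 'I_3 -> F) (u v : 'I_3 -> nat) :
  heron y = 0 -> (forall i, cos_num y i != 0) -> (forall i, cos_den y i != 0) ->
  triangle_word u v = triangle_word v u ->
  \sum_i (u i)%:R * (cos_num y i)^-1 = \sum_i (v i)%:R * (cos_num y i)^-1.
Proof.
move=> heron_y0 num_neq0 den_neq0 word_eq.
set ev := mmap (ratr : rat -> F) y.
have ev_heron : ev (heron mvar3) = 1 ^+ 2 * 0.
  by rewrite mulr0 -heron_y0; exact: rmorph_heron (mmap_mvar3 y).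
have dualized w w' : quad_rescale ev_heron (quad_map ev (triangle_word w w')) =
    qconst 0 (\prod_i cos_den y i ^+ w' i * \prod_i cos_num y i ^+ w i) *
    dual (\sum_i (w i)%:R * (cos_num y i)^-1).
  rewrite (quad_map_angle_word _ _ _ (rmorph_cos_den (mmap_mvar3 y))
                                     (rmorph_cos_num (mmap_mvar3 y))).
  have to_dual i : qconst 0 (cos_num y i) + qconst 0 1 * qroot =
                   qconst 0 (cos_num y i) * dual (cos_num y i)^-1.
    by rewrite rmorph1 mul1r qconst_add_qroot.
  rewrite (quad_rescale_angle_word _ _ _ _ to_dual).
  by rewrite (morph_sum_natmul _ _ (@dualD F) (dual0 F)).
have := dualized u v; rewrite word_eq dualized => /esym /qconst_mul_dual_inj[] //.
by rewrite mulf_neq0 //; apply/prodf_neq0 => i _; rewrite expf_neq0.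
Qed.

Lemma triangle_word_sym_flat (F : realFieldType) (b c : F) (u v : 'I_3 -> nat) :
  0 < b -> 0 < c -> triangle_word u v = triangle_word v u ->
  ((u 1)%:R - (u 0)%:R) * b + ((u 2%:R)%:R - (u 0)%:R) * c =
  ((v 1)%:R - (v 0)%:R) * b + ((v 2%:R)%:R - (v 0)%:R) * c.
Proof.
move=> b_gt0 c_gt0 word_eq.
pose y (i : 'I_3) := [:: b + c; b; c]`_i.
have num0 : cos_num y 0 = - (2 * b * c) by rewrite /cos_num !add0r /y /=; ring.
have num1 : cos_num y 1 = 2 * c * (b + c) by rewrite /cos_num !ord3_addE /y /=; ring.
have num2 : cos_num y 2%:R = 2 * b * (b + c) by rewrite /cos_num !ord3_addE /y /=; ring.
have bc_gt0 : 0 < b + c by rewrite addr_gt0.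
have := @triangle_word_sym_degenerate F y u v.
rewrite !big_ord3 num0 num1 num2 => /(_ _ _ _ word_eq) rel.
have cleared (w : 'I_3 -> nat) :
    ((w 1)%:R - (w 0)%:R) * b + ((w 2%:R)%:R - (w 0)%:R) * c =
    2 * b * c * (b + c) * ((w 0)%:R * (- (2 * b * c))^-1 +
      (w 1)%:R * (2 * c * (b + c))^-1 + (w 2%:R)%:R * (2 * b * (b + c))^-1).
  by field; rewrite !gt_eqF.
rewrite !cleared rel //.
- by rewrite /heron /y /=; ring.
- by move=> i; case: (ord3P i) => ->; rewrite ?num0 ?num1 ?num2 ?oppr_eq0 gt_eqF // !mulr_gt0.
- move=> i; rewrite /cos_den; case: (ord3P i) => ->; rewrite ?add0r ?ord3_addE /y /=.
  all: by rewrite gt_eqF // !mulr_gt0.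
Qed.

Lemma triangle_word_sym_diff_const (F : realFieldType) (u v : 'I_3 -> nat) :
  triangle_word u v = triangle_word v u ->
  forall i, (u i)%:R - (v i)%:R = (u 0)%:R - (v 0)%:R :> F.
Proof.
move=> word_eq i.
have := triangle_word_sym_flat (ltr01 : 0 < 1 :> F) ltr01 word_eq.
have := triangle_word_sym_flat (ltr01 : 0 < 1 :> F) (ltr0n _ 2) word_eq.
by case: (ord3P i) => -> ? ?; lra.
Qed.

Lemma rat_mul_prod_denq (n : nat) (q : 'I_n -> rat) i :
  exists z : int, q i * (\prod_j denq (q j))%:~R = z%:~R.
Proof.
exists (numq (q i) * \prod_(j | j != i) denq (q j)).
by rewrite (bigD1 i) //= !rmorphM mulrA -numqE.
Qed.

Lemma int_diff_nat (z : int) : exists mk : nat * nat, z = mk.1%:Z - mk.2%:Z.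
Proof.
by case: z => m; [exists (m, 0%N); rewrite subr0 | exists (0%N, m.+1); rewrite NegzE sub0r].
Qed.

Lemma lin_indep_Q_nat (R : realType) (n : nat) (a : 'I_n -> R) :
  (forall u v : 'I_n -> nat,
     \sum_i (u i)%:R * a i = \sum_i (v i)%:R * a i -> u =1 v) ->
  lin_indep_Q a.
Proof.
move=> nat_indep q q_rel.
pose D : rat := (\prod_j denq (q j))%:~R.
have D_neq0 : D != 0 by rewrite intr_eq0; apply/prodf_neq0 => j _; apply: denq_neq0.
have mk_ex i : exists mk : nat * nat, q i * D = mk.1%:R - mk.2%:R.
  have [z ->] := rat_mul_prod_denq q i.
  by have [mk ->] := int_diff_nat z; exists mk; rewrite rmorphB.
have [mk mkP] := fin_all_exists mk_ex.
have mk_eq := nat_indep (fun i => (mk i).1) (fun i => (mk i).2).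
move=> i; apply: (mulIf D_neq0); rewrite mul0r mkP mk_eq ?subrr //.
apply/eqP; rewrite -subr_eq0 -sumrB; apply/eqP.
transitivity (ratr D * \sum_j ratr (q j) * a j); last by rewrite q_rel mulr0.
rewrite mulr_sumr; apply: eq_bigr => j _.
rewrite -mulrBl -(ratr_nat _ (mk j).1) -(ratr_nat _ (mk j).2) -rmorphB -mkP.
by rewrite rmorphM /=; ring.
Qed.

Lemma nat_angle_rel_const_diff (R : realType) (l : 'I_3 -> R) (u v : 'I_3 -> nat) :
  is_triangle l ->
  (forall i, (u i)%:R - (v i)%:R = (u 0)%:R - (v 0)%:R :> R) ->
  \sum_i (u i)%:R * tri_angle l i = \sum_i (v i)%:R * tri_angle l i -> u =1 v.
Proof.
move=> lt d_const angle_eq.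
have angles_gt0 : 0 < \sum_i tri_angle l i.
  by rewrite big_ord3 !addr_gt0 // tri_angle_gt0.
have : ((u 0)%:R - (v 0)%:R) * \sum_i tri_angle l i = 0.
  rewrite mulr_sumr (eq_bigr (fun i => ((u i)%:R - (v i)%:R) * tri_angle l i)).
    under eq_bigr do rewrite mulrBl.
    by rewrite sumrB angle_eq subrr.
  by move=> i _; rewrite (d_const i).
move/eqP; rewrite mulf_eq0 (gt_eqF angles_gt0) orbF => /eqP d0 i.
by apply/eqP; rewrite -(eqr_nat R) -subr_eq0 d_const d0.
Qed.

Theorem proposition2p5 (R : realType) (l : 'I_3 -> R) :
  is_triangle l -> generic_triangle l -> typical_triangle l.
Proof.
move=> lt [k [k_gt0 x_indep]].
have [l_gt0 _] := lt.
have xt := is_triangle_scale k_gt0 lt.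
have scaled_angle i : tri_angle (fun j => k * l j) i = tri_angle l i.
  exact: tri_angle_scale.
apply: lin_indep_Q_nat => u v angle_eq.
have word_eq : triangle_word u v = triangle_word v u.
  apply: (triangle_word_sym_of_angles xt x_indep).
  under eq_bigr do rewrite scaled_angle.
  by under [RHS]eq_bigr do rewrite scaled_angle.
apply: (nat_angle_rel_const_diff lt _ angle_eq).
exact: triangle_word_sym_diff_const.
Qed.
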